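(* Let $N,M,k$ be positive integers with $M\le N$, $\omega=e^{2\pi i/N}$, and for $x,s\in\mathbb{Z}_N$ let $|\phi_{x,s}\rangle=\frac{1}{\sqrt M}\sum_{b=0}^{M-1}|b,x+bs\rangle\in\mathbb{C}^{N}\otimes\mathbb{C}^N$ and $\rho_s=\frac1N\sum_{x\in\mathbb{Z}_N}|\phi_{x,s}\rangle\langle\phi_{x,s}|$. Consider the pretty good measurement for the ensemble $\{\rho_s^{\otimes k}\}_{s\in\mathbb{Z}_N}$ with uniform prior, i.e. the POVM with elements $E_j=\Sigma^{-1/2}\rho_j^{\otimes k}\Sigma^{-1/2}$ where $\Sigma=\sum_{j\in\mathbb{Z}_N}\rho_j^{\otimes k}$ and the inverse square root is taken on the support of $\Sigma$. Then for every $s\in\mathbb{Z}_N$, $$\mathrm{tr}(E_s\rho_s^{\otimes k})=\frac{1}{M^kN^{k+1}}\sum_{x\in\mathbb{Z}_N^k}\Big(\sum_{w\in\mathbb{Z}_N}\sqrt{\eta^x_w}\Big)^2,$$ where $\eta^x_w:=|\{b\in\{0,\ldots,M-1\}^k : b\cdot x\equiv w \pmod N\}|$.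
   Context: The states $\rho_s$ arise from the generalized hidden shift problem: given $f:\{0,\ldots,M-1\}\times\mathbb{Z}_N\to S$, injective in $x$ for each fixed $b$, with $f(b,x)=f(b+1,x+s)$ for $b=0,\ldots,M-2$, one prepares the uniform superposition over $(b,x)$, computes $f$ and measures its value. Here $|b\rangle$ for $b\in\{0,\ldots,M-1\}$ are computational basis states of the first register. *)

From mathcomp Require Import all_boot all_order all_algebra.
From mathcomp Require Import algC.
From mathcomp Require Import spectral mxtens.
Set Implicit Arguments. Unset Strict Implicit. Unset Printing Implicit Defensive.
Import Order.TTheory GRing.Theory Num.Theory Num.Def.
Local Open Scope ring_scope.

(* Z_N is represented by 'I_N with arithmetic mod N on the underlying nats.
   C^N (x) C^N is 'cV_(N*N) with basis |b,y> at index mxtens_index (b, y). *)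

Fixpoint tdim (d k : nat) : nat := if k is k'.+1 then (d * tdim d k')%N else 1%N.

Fixpoint tpow (d : nat) (A : 'M[algC]_d) (k : nat) : 'M[algC]_(tdim d k) :=
  if k is k'.+1 then A *t tpow A k' else 1%:M.

Definition adj_mx m n (A : 'M[algC]_(m, n)) : 'M[algC]_(n, m) := (map_mx conjC A)^T.

Definition phi (N M : nat) (x s : 'I_N) : 'cV[algC]_(N * N) :=
  \col_i (let bi := mxtens_unindex i in
          if (bi.1 < M)%N && (nat_of_ord bi.2 == (x + bi.1 * s) %% N)%N
          then (sqrtC (M%:R : algC))^-1 else 0).

Definition rho (N M : nat) (s : 'I_N) : 'M[algC]_(N * N) :=
  (N%:R)^-1 *: \sum_(x < N) (phi M x s *m adj_mx (phi M x s)).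

(* Inverse square root taken on the support, via the spectral decomposition
   A = P^-1 diag(d) P (P unitary) of a normal matrix: eigenvalues d_i <> 0
   are replaced by d_i^{-1/2}, zero eigenvalues stay 0. *)
Definition pinv_sqrt n (A : 'M[algC]_n) : 'M[algC]_n :=
  let P := spectralmx A in
  let d := spectral_diag A in
  invmx P *m diag_mx (\row_i (if d 0 i == 0 then 0 else (sqrtC (d 0 i))^-1)) *m P.

Definition Sigma (N M k : nat) : 'M[algC]_(tdim (N * N) k) :=
  \sum_(j < N) tpow (rho M j) k.

Definition pgm (N M k : nat) (j : 'I_N) : 'M[algC]_(tdim (N * N) k) :=
  pinv_sqrt (Sigma N M k) *m tpow (rho M j) k *m pinv_sqrt (Sigma N M k).

Definition eta (N M k : nat) (x : {ffun 'I_k -> 'I_N}) (w : 'I_N) : nat :=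
  #|[set b : {ffun 'I_k -> 'I_M} | ((\sum_(i < k) b i * x i) %% N == w)%N]|.

From mathcomp Require Import all_boot all_order all_algebra.
From mathcomp Require Import algC cyclotomic spectral mxtens.
From mathcomp Require Import ring.
Import Order.TTheory GRing.Theory Num.Theory.
Local Open Scope ring_scope.
Set Implicit Arguments. Unset Strict Implicit. Unset Printing Implicit Defensive.

(* Write z for a primitive N-th root of unity. A Fourier transform in x gives
   rho_s = N^-1 sum_m |a_{m,s}><a_{m,s}| with
   a_{m,s} = (MN)^-1/2 sum_{b<M, y} z^(m (y - s b)) |b,y>, and a_{m,s} is orthogonal to
   a_{m',s'} whenever m <> m'. Hence rho_s^(x)k = N^-k sum_F |A_{F,s}><A_{F,s}| over F in Z_N^k,
   with A_{F,s} the tensor product of the a_{F_i,s}; distinct F are orthogonal, and for fixed F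
   the Gram matrix <A_{F,j}, A_{F,j'}> = M^-k sum_w eta^F_w z^(w (j - j')) is circulant in j.
   So Y_{F,w} = sum_j z^(w j) A_{F,j} is an eigenvector of Sigma with eigenvalue
   lambda_{F,w} = N^(1-k) M^-k eta^F_w, and inverting the Fourier transform,
   <A_{G,s}, Sigma^-1/2 A_{F,s}> = [G = F] M^-k sum_w eta^F_w / sqrt(lambda_{F,w})
                               = [G = F] N^((k-1)/2) M^(-k/2) sum_w sqrt(eta^F_w).
   Finally tr(E_s rho_s^(x)k) = N^-2k sum_F <A_{F,s}, Sigma^-1/2 A_{F,s}>^2. *)

Section PrimitiveRootSums.

Variables (C : numClosedFieldType) (N : nat) (z : C).
Hypothesis z_prim : N.-primitive_root z.

Lemma prim_root_unit : z \is a GRing.unit.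
Proof. by rewrite unitfE (prim_root_eq0 z_prim) -lt0n (prim_order_gt0 z_prim). Qed.

Lemma prim_exprz_eq1 a : (z ^ a == 1) = (N %| a)%Z.
Proof. by rewrite dvdzE /= (prim_order_dvd z_prim); case: a => n //=; rewrite invr_eq1. Qed.

Lemma prim_exprz_dvd a : (N %| a)%Z -> z ^ a = 1.
Proof. by rewrite -prim_exprz_eq1 => /eqP. Qed.

Lemma prim_exprz_modn n a : z ^ ((n %% N)%N%:Z * a) = z ^ (n%:Z * a).
Proof.
rewrite {2}(divn_eq n N) PoszD PoszM mulrDl exprzDr ?prim_root_unit //.
by rewrite [z ^ (_ * _ * a)]prim_exprz_dvd ?mul1r // mulrAC dvdz_mull.
Qed.

Lemma conjC_prim_exprz a : (z ^ a)^* = z ^ (- a).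
Proof.
have z1 : `|z| = 1.
  apply/eqP; rewrite -(pexpr_eq1 (prim_order_gt0 z_prim)) // -normrX.
  by rewrite (prim_expr_order z_prim) normr1.
have zV : z^* = z^-1 by rewrite invC_norm z1 expr1n invr1 mul1r.
by rewrite -exprz_inv -zV (fmorphXz Num.conj_op).
Qed.

Lemma sum_prim_exprz a :
  \sum_(t < N) z ^ (t%:Z * a) = if (N %| a)%Z then N%:R else 0.
Proof.
have zaX t : z ^ (t%:Z * a) = (z ^ a) ^+ t by rewrite mulrC -exprz_exp.
under eq_bigr => t _ do rewrite zaX.
case: ifPn => [dvd_a | ndvd_a].
  by rewrite prim_exprz_dvd // (eq_bigr (fun _ => 1)) ?sumr_const ?card_ord // => t; rewrite expr1n.
have za1 : z ^ a - 1 != 0 by rewrite subr_eq0 prim_exprz_eq1.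
apply: (mulfI za1); rewrite mulr0 -subrX1 exprnP exprz_exp mulrC.
by rewrite prim_exprz_dvd ?subrr // dvdz_mulr.
Qed.

Lemma sum_prim_exprzB (i j : 'I_N) :
  \sum_(t < N) z ^ (t%:Z * (i%:Z - j%:Z)) = if i == j then N%:R else 0.
Proof. by rewrite sum_prim_exprz -eqz_mod_dvd !modz_small ?ltz_nat ?ltn_ord. Qed.

Lemma fourier_inversion (V : lmodType C) (a : 'I_N -> V) (s : 'I_N) :
  \sum_(w < N) z ^ (- (w%:Z * s%:Z)) *: \sum_(j < N) z ^ (w%:Z * j%:Z) *: a j =
  N%:R *: a s.
Proof.
transitivity (\sum_(j < N) (\sum_(w < N) z ^ (w%:Z * (j%:Z - s%:Z))) *: a j).
  under eq_bigr => w _ do rewrite scaler_sumr.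
  rewrite exchange_big; apply: eq_bigr => j _; rewrite scaler_suml.
  apply: eq_bigr => w _; rewrite scalerA -exprzDr ?prim_root_unit //.
  by congr (z ^ _ *: _); rewrite mulrBr addrC.
under eq_bigr => j _ do rewrite sum_prim_exprzB.
by rewrite (bigD1 s) //= eqxx big1 ?addr0 // => j /negbTE ->; rewrite scale0r.
Qed.

Lemma circulant_eigen (c : 'I_N -> C) (w j' : 'I_N) :
  \sum_(j < N) z ^ (w%:Z * j%:Z) * \sum_(w' < N) c w' * z ^ (w'%:Z * (j'%:Z - j%:Z)) =
  N%:R * c w * z ^ (w%:Z * j'%:Z).
Proof.
transitivity (\sum_(w' < N) c w' * z ^ (w'%:Z * j'%:Z) *
                \sum_(j < N) z ^ (j%:Z * (w%:Z - w'%:Z))).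
  under eq_bigr => j _ do rewrite mulr_sumr.
  rewrite exchange_big; apply: eq_bigr => w' _; rewrite mulr_sumr.
  apply: eq_bigr => j _; rewrite mulrCA -mulrA -!exprzDr ?prim_root_unit //.
  by congr (_ * z ^ _); ring.
under eq_bigr => w' _ do rewrite sum_prim_exprzB.
rewrite (bigD1 w) //= eqxx big1 ?addr0; first by rewrite mulrC mulrA.
by move=> w' /negbTE; rewrite eq_sym => ->; rewrite mulr0.
Qed.

End PrimitiveRootSums.

Section TensorLinearity.

Variable R : comPzRingType.

Lemma tensmx_suml m n p q I (r : seq I) (P : pred I) (F : I -> 'M[R]_(m, n))
    (B : 'M[R]_(p, q)) :
  (\sum_(i <- r | P i) F i) *t B = \sum_(i <- r | P i) (F i *t B).
Proof.
apply/matrixP => i j; rewrite !mxE !summxE mulr_suml.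
by apply: eq_bigr => x _; rewrite !mxE.
Qed.

Lemma tensmx_sumr m n p q I (r : seq I) (P : pred I) (A : 'M[R]_(m, n))
    (F : I -> 'M[R]_(p, q)) :
  A *t (\sum_(i <- r | P i) F i) = \sum_(i <- r | P i) (A *t F i).
Proof.
apply/matrixP => i j; rewrite !mxE !summxE mulr_sumr.
by apply: eq_bigr => x _; rewrite !mxE.
Qed.

Lemma tensmxZl m n p q c (A : 'M[R]_(m, n)) (B : 'M[R]_(p, q)) :
  (c *: A) *t B = c *: (A *t B).
Proof. by apply/matrixP => i j; rewrite !mxE mulrA. Qed.

Lemma tensmxZr m n p q c (A : 'M[R]_(m, n)) (B : 'M[R]_(p, q)) :
  A *t (c *: B) = c *: (A *t B).
Proof. by apply/matrixP => i j; rewrite !mxE mulrCA. Qed.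

End TensorLinearity.

Lemma adj_mxE m n (A : 'M[algC]_(m, n)) i j : adj_mx A i j = (A j i)^*.
Proof. by rewrite !mxE. Qed.

Lemma adj_mxK m n (A : 'M[algC]_(m, n)) : adj_mx (adj_mx A) = A.
Proof. by apply/matrixP => i j; rewrite !adj_mxE conjCK. Qed.

Lemma adj_mxM m n p (A : 'M[algC]_(m, n)) (B : 'M[algC]_(n, p)) :
  adj_mx (A *m B) = adj_mx B *m adj_mx A.
Proof. by rewrite /adj_mx map_mxM trmx_mul. Qed.

Lemma adj_mxZ m n c (A : 'M[algC]_(m, n)) : adj_mx (c *: A) = c^* *: adj_mx A.
Proof. by apply/matrixP => i j; rewrite !mxE rmorphM. Qed.

Lemma adj_mx_sum m n I (r : seq I) (P : pred I) (F : I -> 'M[algC]_(m, n)) :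
  adj_mx (\sum_(i <- r | P i) F i) = \sum_(i <- r | P i) adj_mx (F i).
Proof.
apply/matrixP => i j; rewrite adj_mxE !summxE rmorph_sum.
by apply: eq_bigr => x _; rewrite adj_mxE.
Qed.

Lemma adj_mx_tens m n p q (A : 'M[algC]_(m, n)) (B : 'M[algC]_(p, q)) :
  adj_mx (A *t B) = adj_mx A *t adj_mx B.
Proof. by rewrite /adj_mx map_mxT trmx_tens. Qed.

Lemma adj_mx_normalmx n (A : 'M[algC]_n) : adj_mx A = A -> A \is normalmx.
Proof. by move=> AA; apply/normalmxP; rewrite -map_trmx -/(adj_mx A) AA. Qed.

Definition dot n (u v : 'cV[algC]_n) : algC := (adj_mx u *m v) 0 0.

Lemma dotE n (u v : 'cV[algC]_n) : dot u v = \sum_i (u i 0)^* * v i 0.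
Proof. by rewrite /dot mxE; apply: eq_bigr => i _; rewrite adj_mxE. Qed.

Lemma dotZr n (u v : 'cV[algC]_n) c : dot u (c *: v) = c * dot u v.
Proof. by rewrite /dot -scalemxAr mxE. Qed.

Lemma dot_sumr n (u : 'cV[algC]_n) I (r : seq I) (P : pred I) (v : I -> 'cV[algC]_n) :
  dot u (\sum_(i <- r | P i) v i) = \sum_(i <- r | P i) dot u (v i).
Proof. by rewrite /dot mulmx_sumr summxE. Qed.

Lemma dot_tens m n (u v : 'cV[algC]_m) (U V : 'cV[algC]_n) :
  dot (u *t U : 'cV_(m * n)) (v *t V) = dot u v * dot U V.
Proof.
rewrite /dot (adj_mx_tens u U) (tensmx_mul (adj_mx u) (adj_mx U) v V) !mxE.
by rewrite !(ord1 (mxtens_unindex _).1) !(ord1 (mxtens_unindex _).2).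
Qed.

Lemma mulmx_rank1 n (u v w : 'cV[algC]_n) : u *m adj_mx v *m w = dot v w *: u.
Proof. by rewrite -mulmxA [adj_mx v *m w]mx11_scalar mul_mx_scalar. Qed.

Lemma mxtrace_rank1 n (u v : 'cV[algC]_n) : \tr (u *m adj_mx v) = dot v u.
Proof.
rewrite dotE; apply: eq_bigr => i _.
by rewrite mxE big_ord1 adj_mxE mulrC.
Qed.

Fixpoint tvec (d k : nat) : ('I_k -> 'cV[algC]_d) -> 'cV[algC]_(tdim d k) :=
  match k return ('I_k -> 'cV[algC]_d) -> 'cV[algC]_(tdim d k) with
  | 0 => fun _ => 1%:M
  | k'.+1 => fun u => (u ord0 *t tvec (fun i => u (lift ord0 i)) : 'M_(d * tdim d k', 1))
  end.

Lemma eq_tvec d k (u v : 'I_k -> 'cV[algC]_d) : u =1 v -> tvec u = tvec v.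
Proof.
elim: k u v => [|k IHk] u v uv //=.
by rewrite uv (IHk _ (fun i => v (lift ord0 i))).
Qed.

Lemma dot_tvec d k (u v : 'I_k -> 'cV[algC]_d) :
  dot (tvec u) (tvec v) = \prod_(i < k) dot (u i) (v i).
Proof.
elim: k u v => [|k IHk] u v /=.
  by rewrite big_ord0 /dot /adj_mx mulmx1 !mxE conjC1.
by rewrite (dot_tens (u ord0)) IHk big_ord_recl.
Qed.

Definition ffun_cons (T : finType) k (m : T) (F : {ffun 'I_k -> T}) : {ffun 'I_k.+1 -> T} :=
  [ffun i => if unlift ord0 i is Some j then F j else m].

Lemma ffun_cons0 (T : finType) k (m : T) (F : {ffun 'I_k -> T}) : ffun_cons m F ord0 = m.
Proof. by rewrite ffunE unlift_none. Qed.

Lemma ffun_consS (T : finType) k (m : T) (F : {ffun 'I_k -> T}) i :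
  ffun_cons m F (lift ord0 i) = F i.
Proof. by rewrite ffunE liftK. Qed.

Lemma big_ffunS (V : nmodType) (T : finType) k (h : {ffun 'I_k.+1 -> T} -> V) :
  \sum_(G : {ffun 'I_k.+1 -> T}) h G = \sum_(m : T) \sum_(F : {ffun 'I_k -> T}) h (ffun_cons m F).
Proof.
rewrite pair_big /= (reindex (fun p : T * {ffun 'I_k -> T} => ffun_cons p.1 p.2)) //=.
exists (fun G : {ffun 'I_k.+1 -> T} => (G ord0, [ffun j => G (lift ord0 j)])).
  move=> [m F] _ /=; rewrite ffun_cons0; congr (_, _).
  by apply/ffunP => j; rewrite ffunE ffun_consS.
move=> G _; apply/ffunP => i; rewrite ffunE.
by case: unliftP => [j ->|->]; rewrite ?ffunE.
Qed.

Lemma tpow_sum_rank1 d n k c (u : 'I_n -> 'cV[algC]_d) :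
  tpow (c *: \sum_(m < n) u m *m adj_mx (u m)) k =
  c ^+ k *: \sum_(F : {ffun 'I_k -> 'I_n})
     tvec (fun i => u (F i)) *m adj_mx (tvec (fun i => u (F i))).
Proof.
elim: k => [|k IHk] /=.
  rewrite expr0 scale1r sumr_const card_ffun !card_ord expn0.
  by rewrite /adj_mx map_mx1 trmx1 mulmx1.
rewrite IHk tensmxZl tensmxZr scalerA -exprS big_ffunS tensmx_suml.
congr (_ *: _); apply: eq_bigr => m _; rewrite tensmx_sumr; apply: eq_bigr => F _.
set uF := tvec (fun i => u (F i)).
rewrite ffun_cons0 (@eq_tvec _ _ _ (fun i => u (F i))) => [|i]; last by rewrite ffun_consS.
by rewrite -/uF (adj_mx_tens (u m) uF) (tensmx_mul (u m) uF).
Qed.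

Definition pinv_sqrtC (l : algC) : algC := if l == 0 then 0 else (sqrtC l)^-1.

Lemma pinv_sqrt_eigen n (A : 'M[algC]_n) (v : 'cV[algC]_n) l :
  A \is normalmx -> A *m v = l *: v -> pinv_sqrt A *m v = pinv_sqrtC l *: v.
Proof.
move=> A_normal Av; have AE := orthomx_spectralP A_normal.
rewrite /pinv_sqrt; set P := spectralmx A in AE *; set d := spectral_diag A in AE *.
have P_unit : P \in unitmx by exact: spectral_unit.
have diag_eigen (w : 'cV_n) : diag_mx d *m w = l *: w ->
    diag_mx (\row_i (if d 0 i == 0 then 0 else (sqrtC (d 0 i))^-1)) *m w =
    pinv_sqrtC l *: w.
  move=> /matrixP Dw; apply/matrixP => i j; have := Dw i j.
  rewrite !mul_diag_mx !mxE; have [->|wij] := eqVneq (w i j) 0; first by rewrite !mulr0.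
  by move=> /(mulIf wij) ->.
rewrite -!mulmxA diag_eigen; first by rewrite -scalemxAr mulKmx.
have := congr1 (mulmx P) Av; rewrite {1}AE -!mulmxA mulKVmx //.
by rewrite mulmxA => ->; rewrite scalemxAr.
Qed.

Lemma pinv_sqrtC_natM (r : algC) (n : nat) : 0 < r ->
  pinv_sqrtC (r * n%:R) * n%:R = sqrtC n%:R / sqrtC r.
Proof.
move=> r_gt0; have [->|n0] := eqVneq n 0%N; first by rewrite mulr0 sqrtC0 mul0r.
have rn0 : r * n%:R != 0 by rewrite mulf_neq0 ?pnatr_eq0 // lt0r_neq0.
rewrite /pinv_sqrtC (negbTE rn0) sqrtCM ?qualifE /= ?ler0n ?ltW //.
have sr0 : sqrtC r != 0 by rewrite sqrtC_eq0 lt0r_neq0.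
have sn0 : sqrtC (n%:R : algC) != 0 by rewrite sqrtC_eq0 pnatr_eq0.
by rewrite -{2}(sqrtCK n%:R); field; rewrite sr0 sn0.
Qed.

Lemma sum_mxtens_index (V : nmodType) m n (F : 'I_(m * n) -> V) :
  \sum_i F i = \sum_(a < m) \sum_(b < n) F (mxtens_index (a, b)).
Proof.
rewrite (pair_big xpredT xpredT (fun a b => F (mxtens_index (a, b)))) /=.
rewrite (reindex (fun p : 'I_m * 'I_n => @mxtens_index m n p)) /=.
  by apply: eq_bigr => -[a b].
by exists (@mxtens_unindex m n) => p _; rewrite ?mxtens_indexK ?mxtens_unindexK.
Qed.

Lemma sum_by_residue (R : pzSemiRingType) (T : finType) N (S : T -> nat) (g : nat -> R) :
  (0 < N)%N ->
  \sum_(B : T) g (S B %% N)%N = \sum_(w < N) #|[set B | (S B %% N == w)%N]|%:R * g w.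
Proof.
move=> N_gt0; rewrite (partition_big (fun B => Ordinal (ltn_pmod (S B) N_gt0)) xpredT) //=.
apply: eq_bigr => w _; rewrite (eq_bigr (fun _ => g w)); last by move=> B /eqP <-.
by rewrite sumr_const mulr_natl cardsE; congr (_ *+ _); apply: eq_card => B.
Qed.

Lemma Posz_sum I (r : seq I) (P : pred I) (f : I -> nat) :
  (\sum_(i <- r | P i) f i)%N%:Z = \sum_(i <- r | P i) (f i)%:Z.
Proof. by elim/big_rec2: _ => // i x y _ <-; rewrite PoszD. Qed.

Lemma mul_conjC_inv_sqrtC_nat n : (sqrtC n%:R)^-1 * ((sqrtC n%:R)^-1)^* = n%:R^-1 :> algC.
Proof. by rewrite -normCK normfV ger0_norm ?sqrtC_ge0 ?ler0n // exprVn sqrtCK. Qed.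

Section PrettyGoodMeasurement.

Variables (N M k : nat) (z : algC).
Hypotheses (z_prim : N.-primitive_root z) (M_gt0 : (0 < M)%N) (M_le_N : (M <= N)%N).

Let N_gt0 : (0 < N)%N := prim_order_gt0 z_prim.
Let z_unit : z \is a GRing.unit := prim_root_unit z_prim.

Let natrN_neq0 : N%:R != 0 :> algC.
Proof. by rewrite pnatr_eq0 -lt0n. Qed.

Definition fourier_vec (m j : 'I_N) : 'cV[algC]_(N * N) :=
  \col_i (let bi := mxtens_unindex i in
          if (bi.1 < M)%N
          then (sqrtC (M * N)%:R)^-1 * z ^ (m%:Z * (bi.2%:Z - j%:Z * bi.1%:Z))
          else 0).

Lemma fourier_vecE (m j b y : 'I_N) : fourier_vec m j (mxtens_index (b, y)) 0 =
  if (b < M)%N then (sqrtC (M * N)%:R)^-1 * z ^ (m%:Z * (y%:Z - j%:Z * b%:Z)) else 0.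
Proof. by rewrite mxE mxtens_indexK. Qed.

Lemma phi_fourier (x s : 'I_N) :
  phi M x s = (sqrtC N%:R)^-1 *: \sum_(m < N) z ^ (- (m%:Z * x%:Z)) *: fourier_vec m s.
Proof.
apply/matrixP => i j; rewrite (ord1 j); case: (mxtens_indexP i) => b y.
rewrite !mxE mxtens_indexK summxE /=.
under eq_bigr => m _ do rewrite mxE fourier_vecE.
have [b_lt_M | _] /= := boolP (b < M)%N; last first.
  by rewrite big1 ?mulr0 // => m _; rewrite mulr0.
have -> : \sum_(m < N) z ^ (- (m%:Z * x%:Z)) *
            ((sqrtC (M * N)%:R)^-1 * z ^ (m%:Z * (y%:Z - s%:Z * b%:Z))) =
          (sqrtC (M * N)%:R)^-1 * \sum_(m < N) z ^ (m%:Z * (y%:Z - s%:Z * b%:Z - x%:Z)).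
  rewrite mulr_sumr; apply: eq_bigr => m _.
  by rewrite mulrCA -exprzDr //; congr (_ * z ^ _); ring.
(* the character sum over m detects y = x + b s (mod N) *)
rewrite (sum_prim_exprz z_prim).
have -> : (N %| y%:Z - s%:Z * b%:Z - x%:Z)%Z = (nat_of_ord y == (x + b * s) %% N)%N.
  rewrite (_ : _ - _ = y%:Z - (x + b * s)%N%:Z); last by rewrite PoszD PoszM; ring.
  by rewrite -eqz_mod_dvd !modz_nat eqz_nat modn_small.
case: eqP => _; rewrite ?mulr0 //.
rewrite natrM sqrtCM ?nnegrE ?ler0n // -{3}(sqrtCK N%:R).
have sM0 : sqrtC (M%:R : algC) != 0 by rewrite sqrtC_eq0 pnatr_eq0 -lt0n (leq_trans _ b_lt_M).
have sN0 : sqrtC (N%:R : algC) != 0 by rewrite sqrtC_eq0.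
by field; rewrite sM0 sN0.
Qed.

Lemma sum_rank1_fourier n (a : 'I_N -> 'cV[algC]_n) :
  \sum_(x < N) (\sum_(m < N) z ^ (- (m%:Z * x%:Z)) *: a m) *m
                adj_mx (\sum_(m < N) z ^ (- (m%:Z * x%:Z)) *: a m) =
  N%:R *: \sum_(m < N) a m *m adj_mx (a m).
Proof.
transitivity (\sum_(m < N) \sum_(m' < N)
    (\sum_(x < N) z ^ (x%:Z * (m'%:Z - m%:Z))) *: (a m *m adj_mx (a m'))).
  under eq_bigr => x _ do rewrite adj_mx_sum mulmx_suml.
  rewrite exchange_big; apply: eq_bigr => m _.
  under eq_bigr => x _ do rewrite mulmx_sumr.
  rewrite exchange_big; apply: eq_bigr => m' _; rewrite scaler_suml.
  apply: eq_bigr => x _; rewrite adj_mxZ -scalemxAl -scalemxAr scalerA.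
  by rewrite (conjC_prim_exprz z_prim) -exprzDr //; congr (z ^ _ *: _); ring.
rewrite scaler_sumr; apply: eq_bigr => m _.
under eq_bigr => m' _ do rewrite (sum_prim_exprzB z_prim).
by rewrite (bigD1 m) //= eqxx big1 ?addr0 // => m' /negbTE; rewrite eq_sym => ->; rewrite scale0r.
Qed.

Lemma rho_fourier (s : 'I_N) :
  rho M s = N%:R^-1 *: \sum_(m < N) fourier_vec m s *m adj_mx (fourier_vec m s).
Proof.
rewrite /rho; congr (_ *: _).
under eq_bigr => x _ do rewrite phi_fourier adj_mxZ -scalemxAl -scalemxAr scalerA.
by rewrite -scaler_sumr sum_rank1_fourier scalerA mul_conjC_inv_sqrtC_nat mulVf ?scale1r.
Qed.

Lemma dot_fourier_vec (m j m' j' : 'I_N) :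
  dot (fourier_vec m j) (fourier_vec m' j') =
  if m == m' then M%:R^-1 * \sum_(b < M) z ^ (m%:Z * b%:Z * (j%:Z - j'%:Z)) else 0.
Proof.
rewrite dotE sum_mxtens_index.
transitivity (\sum_(b < N) if (b < M)%N then
   ((M * N)%:R)^-1 * z ^ (b%:Z * (m%:Z * j%:Z - m'%:Z * j'%:Z)) *
   \sum_(y < N) z ^ (y%:Z * (m'%:Z - m%:Z)) else 0).
  apply: eq_bigr => b _; rewrite mulr_sumr; case: ifP => b_lt_M.
    apply: eq_bigr => y _; rewrite !fourier_vecE b_lt_M rmorphM /= (conjC_prim_exprz z_prim).
    rewrite mulrACA [_^* * _]mulrC mul_conjC_inv_sqrtC_nat -mulrA -!exprzDr //.
    by congr (_ * z ^ _); ring.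
  by rewrite big1 // => y _; rewrite !fourier_vecE b_lt_M conjC0 mul0r.
rewrite -big_mkcond /=; under eq_bigr => b _ do rewrite (sum_prim_exprzB z_prim).
rewrite eq_sym; have [->|_] := eqVneq m' m; last by rewrite big1 // => b _; rewrite mulr0.
rewrite (big_ord_widen N (fun b : nat => z ^ (m%:Z * b%:Z * (j%:Z - j'%:Z))) M_le_N).
rewrite mulr_sumr; apply: eq_bigr => b _; rewrite natrM invfM mulrAC divfK //.
congr (_ * z ^ _); ring.
Qed.

Definition fourier_tvec (F : {ffun 'I_k -> 'I_N}) (j : 'I_N) : 'cV[algC]_(tdim (N * N) k) :=
  tvec (fun i => fourier_vec (F i) j).

Lemma tpow_rho (j : 'I_N) :
  tpow (rho M j) k =
  N%:R^-1 ^+ k *: \sum_(F : {ffun 'I_k -> 'I_N}) fourier_tvec F j *m adj_mx (fourier_tvec F j).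
Proof. by rewrite rho_fourier tpow_sum_rank1. Qed.

Lemma dot_fourier_tvec (F G : {ffun 'I_k -> 'I_N}) (j j' : 'I_N) :
  dot (fourier_tvec F j) (fourier_tvec G j') =
  if F == G then M%:R^-1 ^+ k * \sum_(w < N) (eta M F w)%:R * z ^ (w%:Z * (j%:Z - j'%:Z))
  else 0.
Proof.
rewrite /fourier_tvec dot_tvec; under eq_bigr => i _ do rewrite dot_fourier_vec.
have [<-|FG] := eqVneq F G; last first.
  have /existsP[i FGi] : [exists i, F i != G i].
    by apply: contraNT FG => /existsPn FG; apply/eqP/ffunP => i; apply/eqP/negbNE/FG.
  by rewrite (bigD1 i) //= (negbTE FGi) mul0r.
under eq_bigr => i _ do rewrite eqxx.
rewrite big_split /= prodr_const card_ord bigA_distr_bigA /=; congr (_ * _).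
transitivity (\sum_(B : {ffun 'I_k -> 'I_M})
    z ^ (((\sum_(i < k) B i * F i) %% N)%N%:Z * (j%:Z - j'%:Z))).
  apply: eq_bigr => B _; rewrite (prim_exprz_modn z_prim) Posz_sum mulr_suml.
  elim/big_rec2: _ => [|i x e _ ->]; first by rewrite expr0z.
  by rewrite -exprzDr // PoszM; congr (z ^ (_ + _)); ring.
exact: (sum_by_residue (fun B : {ffun 'I_k -> 'I_M} => \sum_(i < k) B i * F i)%N
                       (fun w => z ^ (w%:Z * (j%:Z - j'%:Z)))).
Qed.

Definition sigma_eigvec (F : {ffun 'I_k -> 'I_N}) (w : 'I_N) : 'cV[algC]_(tdim (N * N) k) :=
  \sum_(j < N) z ^ (w%:Z * j%:Z) *: fourier_tvec F j.

Definition sigma_eigval (F : {ffun 'I_k -> 'I_N}) (w : 'I_N) : algC :=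
  N%:R / (N%:R * M%:R) ^+ k * (eta M F w)%:R.

Lemma dot_fourier_tvec_eigvec (G F : {ffun 'I_k -> 'I_N}) (j' w : 'I_N) :
  dot (fourier_tvec G j') (sigma_eigvec F w) =
  if G == F then N%:R * M%:R^-1 ^+ k * (eta M F w)%:R * z ^ (w%:Z * j'%:Z) else 0.
Proof.
rewrite dot_sumr; under eq_bigr => j _ do rewrite dotZr dot_fourier_tvec.
have [->|_] := eqVneq G F; last by rewrite big1 // => j _; rewrite mulr0.
under eq_bigr => j _ do rewrite mulrCA.
by rewrite -mulr_sumr (circulant_eigen z_prim (fun w' => (eta M F w')%:R)); ring.
Qed.

Lemma Sigma_eigvec (F : {ffun 'I_k -> 'I_N}) (w : 'I_N) :
  Sigma N M k *m sigma_eigvec F w = sigma_eigval F w *: sigma_eigvec F w.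
Proof.
rewrite /Sigma mulmx_suml.
under eq_bigr => j' _ do rewrite tpow_rho -scalemxAl mulmx_suml.
under eq_bigr => j' _ do under eq_bigr => G _ do rewrite mulmx_rank1 dot_fourier_tvec_eigvec.
rewrite /sigma_eigvec scaler_sumr; apply: eq_bigr => j' _.
rewrite (bigD1 F) //= eqxx big1 ?addr0 => [|G /negbTE -> //]; last by rewrite scale0r.
rewrite !scalerA; congr (_ *: _).
by rewrite /sigma_eigval exprMn invfM -!exprVn; ring.
Qed.

Lemma adj_Sigma : adj_mx (Sigma N M k) = Sigma N M k.
Proof.
rewrite /Sigma adj_mx_sum; apply: eq_bigr => j _.
rewrite tpow_rho adj_mxZ adj_mx_sum rmorphXn /= geC0_conj ?invr_ge0 ?ler0n //.
by congr (_ *: _); apply: eq_bigr => F _; rewrite adj_mxM adj_mxK.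
Qed.

Lemma pinv_sqrt_Sigma_eigvec (F : {ffun 'I_k -> 'I_N}) (w : 'I_N) :
  pinv_sqrt (Sigma N M k) *m sigma_eigvec F w = pinv_sqrtC (sigma_eigval F w) *: sigma_eigvec F w.
Proof. exact/pinv_sqrt_eigen/Sigma_eigvec/adj_mx_normalmx/adj_Sigma. Qed.

Definition pgm_coef (F : {ffun 'I_k -> 'I_N}) : algC :=
  M%:R^-1 ^+ k * \sum_(w < N) pinv_sqrtC (sigma_eigval F w) * (eta M F w)%:R.

Lemma dot_fourier_tvec_pinv_sqrt_Sigma (G F : {ffun 'I_k -> 'I_N}) (s : 'I_N) :
  dot (fourier_tvec G s) (pinv_sqrt (Sigma N M k) *m fourier_tvec F s) =
  if G == F then pgm_coef F else 0.
Proof.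
have F_inv : fourier_tvec F s =
    N%:R^-1 *: \sum_(w < N) z ^ (- (w%:Z * s%:Z)) *: sigma_eigvec F w.
  by rewrite (fourier_inversion z_prim) scalerA mulVf ?scale1r.
rewrite F_inv -scalemxAr mulmx_sumr dotZr dot_sumr.
under eq_bigr => w _ do rewrite -scalemxAr pinv_sqrt_Sigma_eigvec scalerA dotZr.
under eq_bigr => w _ do rewrite dot_fourier_tvec_eigvec.
have [_|_] := eqVneq G F; last by rewrite big1 ?mulr0 // => w _; rewrite mulr0.
rewrite /pgm_coef !mulr_sumr; apply: eq_bigr => w _.
have zs : z ^ (- (w%:Z * s%:Z)) * z ^ (w%:Z * s%:Z) = 1 by rewrite -exprzDr // addNr expr0z.
transitivity (N%:R^-1 * N%:R * (z ^ (- (w%:Z * s%:Z)) * z ^ (w%:Z * s%:Z)) *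
  (M%:R^-1 ^+ k * (pinv_sqrtC (sigma_eigval F w) * (eta M F w)%:R))); first ring.
by rewrite zs mulVf // !mul1r.
Qed.

Lemma mxtrace_pgm_rho (s : 'I_N) :
  \tr (pgm M k s *m tpow (rho M s) k) =
  (N%:R^-1 ^+ k) ^+ 2 * \sum_(F : {ffun 'I_k -> 'I_N}) pgm_coef F ^+ 2.
Proof.
rewrite /pgm tpow_rho; set c := N%:R^-1 ^+ k.
have SA_rank1 (S : 'M_(tdim (N * N) k)) G :
    S *m (c *: \sum_F fourier_tvec F s *m adj_mx (fourier_tvec F s)) *m S *m fourier_tvec G s =
    c *: \sum_F dot (fourier_tvec F s) (S *m fourier_tvec G s) *: (S *m fourier_tvec F s).
  rewrite -!mulmxA -scalemxAl -scalemxAr; congr (_ *: _).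
  rewrite mulmx_suml mulmx_sumr; apply: eq_bigr => F _.
  by rewrite -mulmxA (mulmxA (fourier_tvec F s)) mulmx_rank1 scalemxAr.
rewrite -scalemxAr mulmx_sumr linearZ /= linear_sum /= expr2 -mulrA; congr (_ * _).
under eq_bigr => G _ do rewrite mulmxA mxtrace_rank1 SA_rank1 dotZr dot_sumr.
rewrite -mulr_sumr; congr (_ * _); apply: eq_bigr => G _.
rewrite (bigD1 G) //= big1 ?addr0 => [|F FG]; rewrite dotZr.
  by rewrite !dot_fourier_tvec_pinv_sqrt_Sigma eqxx expr2.
by rewrite dot_fourier_tvec_pinv_sqrt_Sigma (negbTE FG) mul0r.
Qed.

Lemma pgm_coefE (F : {ffun 'I_k -> 'I_N}) :
  pgm_coef F = M%:R^-1 ^+ k / sqrtC (N%:R / (N%:R * M%:R) ^+ k) *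
               \sum_(w < N) sqrtC (eta M F w)%:R.
Proof.
have r_gt0 : 0 < N%:R / (N%:R * M%:R) ^+ k :> algC.
  by rewrite divr_gt0 ?exprn_gt0 ?mulr_gt0 ?ltr0n.
rewrite /pgm_coef -mulrA [in RHS]mulr_sumr; congr (_ * _); apply: eq_bigr => w _.
by rewrite pinv_sqrtC_natM // mulrC.
Qed.

End PrettyGoodMeasurement.

Theorem mainTheorem6 (N M k : nat) (hN : (0 < N)%N) (hM : (0 < M)%N)
    (hk : (0 < k)%N) (hMN : (M <= N)%N) (s : 'I_N) :
  \tr (pgm M k s *m tpow (rho M s) k) =
    ((M ^ k * N ^ k.+1)%:R)^-1 *
    \sum_(x : {ffun 'I_k -> 'I_N})
       (\sum_(w < N) sqrtC ((eta M x w)%:R : algC)) ^+ 2.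
Proof.
have [z z_prim] := C_prim_root_exists hN.
rewrite (mxtrace_pgm_rho _ z_prim hMN).
under eq_bigr => F _ do rewrite (pgm_coefE z_prim hM) exprMn.
rewrite -mulr_sumr mulrA; congr (_ * _).
have N0 : N%:R != 0 :> algC by rewrite pnatr_eq0 -lt0n.
have M0 : M%:R != 0 :> algC by rewrite pnatr_eq0 -lt0n.
rewrite expr_div_n sqrtCK natrM !natrX [N%:R ^+ k.+1]exprS exprMn !exprVn.
have Nk0 : N%:R ^+ k != 0 :> algC by rewrite expf_neq0.
have Mk0 : M%:R ^+ k != 0 :> algC by rewrite expf_neq0.
move: Nk0 Mk0; set a := N%:R ^+ k; set b := M%:R ^+ k => Nk0 Mk0.
by field; rewrite N0 Nk0 Mk0.
Qed.
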